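(* Let $p$ be a prime and let $\Phi_p$ be the set of all $F$-pure thresholds $\operatorname{fpt}(R,f)$, where $R$ ranges over all $F$-pure rings of characteristic $p$ and $f$ ranges over all non-zero non-units of $R$. Then for every integer $e\ge 1$ and every $\beta\in[0,1]\cap \frac{1}{p^e}\mathbb{N}$, we have \[ \Phi_p \cap \left(\beta, \tfrac{p^e}{p^e-1}\beta\right)=\emptyset. \]
   Context: A ring $R$ of characteristic $p$ is $F$-pure if the inclusion $R \subseteq R^{1/p}$ splits as a map of $R$-modules; such a ring is reduced. Roots. $R^{1/p^e}$ is the ring of formal $p^e$-th roots $r^{1/p^e}$ of elements $r\in R$. Its operations are $r^{1/p^e}+s^{1/p^e}=(r+s)^{1/p^e}$ and $r^{1/p^e}s^{1/p^e}=(rs)^{1/p^e}$. It contains $R$ via $r\mapsto (r^{p^e})^{1/p^e}$. Powers of $f$. For $a \in\mathbb{N}$, $f^{a/p^e}:=(f^a)^{1/p^e}$. Splitting. For $t\in R^{1/p^e}$, the inclusion $R\cdot t\subseteq R^{1/p^e}$ splits if there is an $R$-linear $\theta:R^{1/p^e}\to R$ with $\theta(t)=1$. Pairs. For $\lambda\ge0$, the pair $(R,f^\lambda)$ is $F$-pure if $R\cdot f^{\lfloor (p^e-1)\lambda\rfloor/p^e}\subseteq R^{1/p^e}$ splits for all $e\geq1$. $F$-pure threshold. $\operatorname{fpt}(R,f)$ is the supremum of all $\lambda\ge0$ with $(R,f^\lambda)$ $F$-pure. *)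

From HB Require Import structures.
From mathcomp Require Import all_boot all_order all_algebra.
From mathcomp Require Import classical_sets reals Rstruct.
From Stdlib Require Rdefinitions.
Notation R := Rdefinitions.R.
Set Implicit Arguments. Unset Strict Implicit. Unset Printing Implicit Defensive.
Import Order.TTheory GRing.Theory Num.Theory.
Local Open Scope ring_scope.

(* The ring R^{1/p^e} of formal p^e-th roots s^{1/p^e} (s : A) is identified
   with A itself via s^{1/p^e} |-> s.  Under this identification the R-module
   structure is  r . s^{1/p^e} = (r^{p^e} s)^{1/p^e}, i.e. r . s = r^(p^e) * s.
   An R-linear map theta : A^{1/p^e} -> A is thus an additive map
   theta : A -> A with theta (r^(p^e) * s) = r * theta s.
   [root_splits p e s] : the inclusion A . s^{1/p^e} ⊆ A^{1/p^e} splits,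
   i.e. there is an A-linear theta : A^{1/p^e} -> A with theta (s^{1/p^e}) = 1. *)
Definition root_splits (A : comNzRingType) (p e : nat) (s : A) : Prop :=
  exists theta : A -> A,
    (forall x y : A, theta (x + y) = theta x + theta y) /\
    (forall r x : A, theta (r ^+ (p ^ e) * x) = r * theta x) /\
    theta s = 1.

(* A is F-pure: A ⊆ A^{1/p} splits (A = A . 1^{1/p}, the image of 1). *)
Definition F_pure (A : comNzRingType) (p : nat) : Prop :=
  root_splits p 1 (1 : A).

Definition pair_F_pure (A : comNzRingType) (p : nat) (f : A) (lambda : R) : Prop :=
  forall e : nat, (1 <= e)%N ->
    root_splits p e (f ^+ `|Num.floor ((p ^ e - 1)%N%:R * lambda)|%N).

Definition fpt (A : comNzRingType) (p : nat) (f : A) : R :=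
  reals.sup [set lambda : R | (0 <= lambda) /\ pair_F_pure p f lambda]%classic.

Definition is_unit (A : comNzRingType) (f : A) : Prop := exists g : A, f * g = 1.

From HB Require Import structures.
From mathcomp Require Import all_boot all_order all_algebra.
From mathcomp Require Import classical_sets reals Rstruct boolp.
From mathcomp Require Import zify ring.
Import Order.TTheory GRing.Theory Num.Theory.
Set Implicit Arguments.
Unset Strict Implicit.
Unset Printing Implicit Defensive.
Local Open Scope ring_scope.

(* Splittings compose: if f^a splits at level n and f^a' at level n', then
   f^(a + p^n a') splits at level n + n'.  In characteristic p they also
   descend: a splitting of x^(p^k) at level m + k yields one of x at level m,
   the Frobenius being additive.  Iterating a splitting of f^b at level e gives
   f^(b (1 + q + ... + q^(m-1))) at level m e, q = p^e, which descends to the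
   splittings making (A, f^(b/(q-1))) F-pure.  Conversely, F-purity of
   (A, f^l) with l > b/q, used at a large level e + k, descends to a splitting
   of f^b at level e.  So any threshold above beta = b/q reaches
   b/(q-1) = q/(q-1) beta. *)

Section RootSplits.
Variables (A : comNzRingType) (p : nat).
Implicit Types (f x : A) (a c n m k : nat).

Lemma root_splits_exprW n f a c :
  (a <= c)%N -> root_splits p n (f ^+ c) -> root_splits p n (f ^+ a).
Proof.
move=> le_ac [th [thD [thM th1]]].
exists (fun x => th (f ^+ (c - a) * x)); split; [|split].
- by move=> x y; rewrite mulrDr thD.
- by move=> r x; rewrite mulrCA thM.
- by rewrite -exprD subnK.
Qed.

Lemma root_splits0 : root_splits p 0 (1 : A).
Proof. by exists id; split=> // r x; rewrite expn0 expr1. Qed.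

Lemma root_splits_comp n n' f a a' :
  root_splits p n (f ^+ a) -> root_splits p n' (f ^+ a') ->
  root_splits p (n + n') (f ^+ (a + p ^ n * a')).
Proof.
move=> [th [thD [thM th1]]] [ph [phD [phM ph1]]].
exists (ph \o th); split; [|split] => /=.
- by move=> x y; rewrite thD phD.
- by move=> r x; rewrite expnD mulnC exprM thM phM.
- by rewrite exprD mulnC exprM mulrC thM th1 mulr1.
Qed.

Lemma root_splits_geometric e f b k :
  root_splits p e (f ^+ b) ->
  root_splits p (k * e) (f ^+ (b * \sum_(i < k) (p ^ e) ^ i)).
Proof.
move=> splits_b; elim: k => [|k IHk].
  by rewrite big_ord0 muln0 expr0; exact: root_splits0.
rewrite big_ord_recl expn0 mulSn mulnDr muln1.
under eq_bigr do rewrite lift0 expnS.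
by rewrite -big_distrr /= mulnCA; apply: root_splits_comp.
Qed.

Hypothesis pA : p \in [pchar A].

Lemma root_splits_frobenius m k x :
  root_splits p (m + k) (x ^+ (p ^ k)) -> root_splits p m x.
Proof.
have pk : [pchar A].-nat (p ^ k)%N.
  by rewrite pnatX (prime.pnatE _ (pcharf_prime pA)) pA.
move=> [th [thD [thM th1]]].
exists (fun y => th (y ^+ (p ^ k))); split; [|split] => //.
- by move=> y z; rewrite exprDn_pchar // thD.
- by move=> r y; rewrite exprMn -exprM -expnD thM.
Qed.

Lemma root_splits_descent m k f a c : (a * p ^ k <= c)%N ->
  root_splits p (m + k) (f ^+ c) -> root_splits p m (f ^+ a).
Proof.
move=> le_c /(root_splits_exprW le_c); rewrite exprM.
exact: root_splits_frobenius.
Qed.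

End RootSplits.

Lemma absz_floorE (F : archiRealFieldType) (x : F) :
  0 <= x -> `|Num.floor x|%N = Num.truncn x.
Proof. by move=> x0; rewrite truncn_floor x0. Qed.

Section PairFPure.
Variables (A : comNzRingType) (p : nat) (f : A).
Hypotheses (p_gt1 : (1 < p)%N) (pA : p \in [pchar A]).

Lemma root_splits_of_pair_F_pure e b (l : R) :
  pair_F_pure p f l -> b%:R / (p ^ e)%N%:R < l -> root_splits p e (f ^+ b).
Proof.
move=> pure_l lt_bl.
set q : R := (p ^ e)%N%:R.
have q_gt0 : 0 < q by rewrite ltr0n expn_gt0 ltnW.
have l_gt0 : 0 < l by apply: le_lt_trans lt_bl; rewrite divr_ge0 // ltW.
set d := q * l - b%:R.
have d_gt0 : 0 < d by rewrite subr_gt0 mulrC -ltr_pdivrMr.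
(* p^k d >= l is what makes floor((p^(e+k) - 1) l) >= b p^k. *)
set k := (Num.truncn (l / d)).+1.
have lt_l_pk : l < (p ^ k)%N%:R * d.
  rewrite -ltr_pdivrMr //; apply: (lt_le_trans (truncnS_gt _)).
  by rewrite ler_nat ltnW // ltn_expl.
apply: (root_splits_descent pA _ (pure_l (e + k)%N ltac:(by rewrite /k addnS))).
rewrite absz_floorE; last by rewrite mulr_ge0 // ltW.
rewrite truncn_ge_nat; last by rewrite mulr_ge0 // ltW.
rewrite natrB ?expn_gt0 ?(ltnW p_gt1) // natrM expnD natrM -/q.
set P : R := (p ^ k)%N%:R in lt_l_pk *; clearbody P.
have -> : (q * P - 1) * l = b%:R * P + (P * d - l) by rewrite /d; ring.
by rewrite lerDl subr_ge0 ltW.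
Qed.

Lemma pair_F_pure_of_root_splits e b : (1 <= e)%N ->
  root_splits p e (f ^+ b) -> pair_F_pure p f (b%:R / ((p ^ e)%N%:R - 1)).
Proof.
move=> e_gt0 splits_b m _.
set q := (p ^ e)%N.
have q_gt1 : (1 < q)%N := leq_ltn_trans e_gt0 (ltn_expl e p_gt1).
have -> : (q%:R - 1 : R) = (q - 1)%N%:R by rewrite natrB // ltnW.
set a := `|_|%N.
have a_le : (a * (q - 1) <= (p ^ m - 1) * b)%N.
  have qB1_gt0 : (0 : R) < (q - 1)%N%:R by rewrite ltr0n subn_gt0.
  rewrite -(ler_nat R) !natrM -ler_pdivlMr // -mulrA /a absz_floorE ?truncn_le;
    by rewrite mulr_ge0 // divr_ge0.
have le_me : (m <= m * e)%N by rewrite leq_pmulr.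
apply: (@root_splits_descent _ _ pA m (m * e - m)); last first.
  by rewrite subnKC //; exact: root_splits_geometric splits_b.
rewrite -/q -(leq_pmul2r (_ : 0 < q.-1)%N) -?subn1 ?subn_gt0 //.
have geom := predn_exp q m; rewrite -!subn1 in geom.
have qm : (q ^ m = p ^ m * p ^ (m * e - m))%N.
  by rewrite -expnD subnKC // -expnM mulnC.
have X_gt0 : (0 < p ^ m)%N by rewrite expn_gt0 ltnW.
have Y_gt0 : (0 < p ^ (m * e - m))%N by rewrite expn_gt0 ltnW.
(* a (q-1) p^(me-m) <= (p^m - 1) b p^(me-m) <= b (q^m - 1) = b (q-1) sum_i q^i *)
move: geom a_le X_gt0 Y_gt0; rewrite qm; clearbody a q.
move: (p ^ m)%N (p ^ (m * e - m))%N (\sum_(i < m) q ^ i)%N => X Y S.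
nia.
Qed.

End PairFPure.

Lemma sup_gap (F : realType) (E : set F) (x y : F) : 0 <= x ->
  (forall l, E l -> x < l -> E y) -> ~ (x < sup E < y).
Proof.
move=> x_ge0 gap /andP[lt_x_sup lt_sup_y].
have [supE | /sup_out supE0] := pselect (has_sup E); last first.
  by move: lt_x_sup; rewrite supE0 ltNge x_ge0.
have eps_gt0 : 0 < sup E - x by rewrite subr_gt0.
have [l El] := sup_adherent eps_gt0 supE.
rewrite opprB addrCA subrr addr0 => /(gap l El) Ey.
by move: lt_sup_y; rewrite ltNge sup_upper_bound.
Qed.

Theorem mainTheorem2 (p : nat) (hp : prime p) (e : nat) (he : (1 <= e)%N)
  (b : nat) (hb : (b <= p ^ e)%N) :
  let beta : R := b%:R / (p ^ e)%N%:R in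
  forall (A : comNzRingType) (f : A),
    p \in [pchar A] -> F_pure A p -> f != 0 -> ~ is_unit f ->
    ~ (beta < fpt p f < (p ^ e)%N%:R / ((p ^ e)%N%:R - 1) * beta).
Proof.
(* F-purity of A, f being a nonzero nonunit and b <= p^e only make the
   thresholds those of the paper; the gap does not need them. *)
move=> beta A f pA _ _ _.
have p_gt1 := prime_gt1 hp.
have q_gt1 : (1 : R) < (p ^ e)%N%:R.
  by rewrite ltr1n (leq_ltn_trans he (ltn_expl e p_gt1)).
have q_gt0 : (0 : R) < (p ^ e)%N%:R := lt_trans ltr01 q_gt1.
have beta_ge0 : 0 <= beta by rewrite divr_ge0 // ltW.
have -> : (p ^ e)%N%:R / ((p ^ e)%N%:R - 1) * beta = b%:R / ((p ^ e)%N%:R - 1).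
  by rewrite /beta; field; rewrite subr_eq0 !gt_eqF.
apply: sup_gap => // l [_ pure_l] lt_beta_l; split.
- by rewrite divr_ge0 // subr_ge0 ltW.
- apply: (pair_F_pure_of_root_splits p_gt1 pA he).
  exact: (root_splits_of_pair_F_pure p_gt1 pA pure_l (lt_beta_l : b%:R / (p ^ e)%N%:R < l)).
Qed.
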